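(* Let $d$ be prime, $n\ge1$, $G$ nontrivial and invertible over $\mathbb Z_d$, and let $\Lambda_1,\Lambda_2$ be $n$-qudit quantum channels. Then the convolution $\Lambda_1\boxtimes\Lambda_2$ (the channel whose Choi state is $J_{\Lambda_1}\boxtimes J_{\Lambda_2}$) is well defined and satisfies $$\Lambda_1\boxtimes\Lambda_2=\mathcal E\circ(\Lambda_1\otimes\Lambda_2)\circ\mathcal E^{-1},$$ where $\mathcal E(\cdot)=\mathrm{Tr}_B[U(\cdot)U^\dagger]$ and $\mathcal E^{-1}(\rho)=U^\dagger(\rho\otimes I_n/d^n)U$.
   Context: Fix a prime $d$. $G=\begin{pmatrix}g_{00}&g_{01}\\ g_{10}&g_{11}\end{pmatrix}$ over $\mathbb Z_d$, $\det G\not\equiv 0$, $N=(\det G)^{-1}$; nontrivial means at most one entry is $0$ mod $d$. For any $m$, the key unitary on $(\mathbb C^d)^{\otimes m}\otimes(\mathbb C^d)^{\otimes m}$ is $U|\vec i\rangle|\vec j\rangle=|Ng_{11}\vec i-Ng_{10}\vec j\rangle|-Ng_{01}\vec i+Ng_{00}\vec j\rangle$ ($\vec i,\vec j\in\mathbb Z_d^m$), and for $m$-qudit states $\rho\boxtimes\sigma=\mathrm{Tr}_B[U(\rho\otimes\sigma)U^\dagger]$. The Choi state of an $n$-qudit channel $\Lambda$ is the $2n$-qudit state $J_\Lambda=(\mathrm{id}_A\otimes\Lambda)(|\Phi\rangle\langle\Phi|)$ with $|\Phi\rangle=d^{-n/2}\sum_{\vec j\in\mathbb Z_d^n}|\vec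 j\rangle_A|\vec j\rangle_{A'}$, so that $\Lambda(\rho)=d^n\mathrm{Tr}_A[J_\Lambda(\rho^T\otimes I)]$. The convolution $J_{\Lambda_1}\boxtimes J_{\Lambda_2}$ is taken with $m=2n$ (the $2n$ qudits of $AA'$), and $\Lambda_1\boxtimes\Lambda_2$ is the map $\rho\mapsto d^n\mathrm{Tr}_A[(J_{\Lambda_1}\boxtimes J_{\Lambda_2})(\rho^T\otimes I)]$. In $\mathcal E$, $U$ is the key unitary with $m=n$. *)

From mathcomp Require Import all_boot all_algebra.
Set Implicit Arguments. Unset Strict Implicit. Unset Printing Implicit Defensive.
Import GRing.Theory Num.Theory.
Local Open Scope ring_scope.

Section Ops.
Variable C : numClosedFieldType.

(* Operators on the Hilbert space C^T with orthonormal basis indexed by T. *)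
Definition op (T : finType) := T -> T -> C.

Definition mulop (T : finType) (X Y : op T) : op T :=
  fun i j => \sum_k X i k * Y k j.
Definition adjop (T : finType) (X : op T) : op T := fun i j => (X j i)^*.
Definition trop (T : finType) (X : op T) : C := \sum_i X i i.
Definition transpose (T : finType) (X : op T) : op T := fun i j => X j i.
Definition idop (T : finType) : op T := fun i j => (i == j)%:R.
Definition scaleop (T : finType) (a : C) (X : op T) : op T := fun i j => a * X i j.
Definition addop (T : finType) (X Y : op T) : op T := fun i j => X i j + Y i j.

Definition tensop (S T : finType) (X : op S) (Y : op T) : op (S * T)%type :=
  fun i j => X i.1 j.1 * Y i.2 j.2.
Definition ptrace1 (S T : finType) (X : op (S * T)%type) : op T :=
  fun i j => \sum_s X (s, i) (s, j).
Definition ptrace2 (S T : finType) (X : op (S * T)%type) : op S :=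
  fun i j => \sum_t X (i, t) (j, t).

Definition ketbra (T : finType) (a b : T) : op T :=
  fun i j => ((i == a) && (j == b))%:R.

Definition psd (T : finType) (X : op T) : Prop :=
  forall v : T -> C, 0 <= \sum_i \sum_j (v i)^* * X i j * v j.

Definition linmap (S T : finType) (Phi : op S -> op T) : Prop :=
  forall (a : C) (X Y : op S), Phi (addop (scaleop a X) Y) = addop (scaleop a (Phi X)) (Phi Y).

(* id_R ⊗ Phi, defined blockwise: (id ⊗ Phi)(Σ |r><r'| ⊗ X_{rr'}) = Σ |r><r'| ⊗ Phi(X_{rr'}) *)
Definition idtens (R S T : finType) (Phi : op S -> op T) (X : op (R * S)%type) : op (R * T)%type :=
  fun i j => Phi (fun s s' => X (i.1, s) (j.1, s')) i.2 j.2.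

(* Phi1 ⊗ Phi2, defined by linear extension from product matrix units *)
Definition tensmap (S1 T1 S2 T2 : finType) (Phi1 : op S1 -> op T1) (Phi2 : op S2 -> op T2)
    (X : op (S1 * S2)%type) : op (T1 * T2)%type :=
  fun i j => \sum_a \sum_b X a b * (Phi1 (ketbra a.1 b.1) i.1 j.1 * Phi2 (ketbra a.2 b.2) i.2 j.2).

Definition is_channel (S T : finType) (Phi : op S -> op T) : Prop :=
  [/\ linmap Phi,
      (forall (k : nat) (X : op ('I_k * S)%type), psd X -> psd (idtens Phi X)) &
      (forall X : op S, trop (Phi X) = trop X)].

Definition conj (T : finType) (U X : op T) : op T := mulop (mulop U X) (adjop U).
End Ops.

(* Z_d^m (row vectors), the computational basis labels of m qudits ('F_d = Z_d for d prime). *)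
Notation qv d m := 'rV['F_d]_m.

Definition nontrivial (K : fieldType) (G : 'M[K]_2) : bool :=
  (#|[set ij : 'I_2 * 'I_2 | G ij.1 ij.2 == 0%R]| <= 1)%N.

Definition keymap (K : fieldType) (V : lmodType K) (G : 'M[K]_2) (x : V * V) : V * V :=
  let N := (\det G)^-1 in
  (N * G 1 1 *: x.1 - N * G 1 0 *: x.2, - (N * G 0 1) *: x.1 + N * G 0 0 *: x.2).

Definition permop (C : numClosedFieldType) (T : finType) (f : T -> T) : op C T :=
  fun y x => (y == f x)%:R.

Section Qudits.
Variables (C : numClosedFieldType) (d : nat) (G : 'M['F_d]_2).

Definition Ukey (m : nat) : op C (qv d m * qv d m)%type :=
  @permop C _ (@keymap _ (qv d m) G).

(* key unitary for the 2n qudits A A' (basis labels Z_d^n × Z_d^n = Z_d^{2n},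
   acting componentwise, i.e. the m = 2n key unitary) *)
Definition Ukey2 (n : nat) : op C ((qv d n * qv d n) * (qv d n * qv d n))%type :=
  @permop C _ (@keymap _ (qv d n * qv d n)%type G).

Definition sconv (m : nat) (rho sigma : op C (qv d m)) : op C (qv d m) :=
  ptrace2 (conj (@Ukey m) (tensop rho sigma)).

Definition sconv2 (n : nat) (J1 J2 : op C (qv d n * qv d n)%type) : op C (qv d n * qv d n)%type :=
  ptrace2 (conj (@Ukey2 n) (tensop J1 J2)).

(* Choi state J_Lambda = (id_A ⊗ Lambda)(|Phi><Phi|),
   |Phi> = d^{-n/2} Σ_j |j>_A |j>_A' *)
Definition maxent (n : nat) : op C (qv d n * qv d n)%type :=
  fun i j => (d ^ n)%:R^-1 * ((i.1 == i.2) && (j.1 == j.2))%:R.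
Definition choi (n : nat) (L : op C (qv d n) -> op C (qv d n)) : op C (qv d n * qv d n)%type :=
  idtens L (@maxent n).

Definition map_of_choi (n : nat) (J : op C (qv d n * qv d n)%type) (rho : op C (qv d n)) : op C (qv d n) :=
  scaleop (d ^ n)%:R (ptrace1 (mulop J (tensop (transpose rho) (@idop C (qv d n))))).

Definition chconv (n : nat) (L1 L2 : op C (qv d n) -> op C (qv d n)) :
    op C (qv d n) -> op C (qv d n) :=
  map_of_choi (sconv2 (choi L1) (choi L2)).

Definition Emap (n : nat) (X : op C (qv d n * qv d n)%type) : op C (qv d n) :=
  ptrace2 (conj (@Ukey n) X).
Definition Einv (n : nat) (rho : op C (qv d n)) : op C (qv d n * qv d n)%type :=
  mulop (mulop (adjop (@Ukey n)) (tensop rho (scaleop (d ^ n)%:R^-1 (@idop C (qv d n))))) (@Ukey n).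
End Qudits.

From mathcomp Require Import all_boot all_algebra.
From mathcomp Require Import ring.
From Stdlib Require Import FunctionalExtensionality.
Set Implicit Arguments. Unset Strict Implicit. Unset Printing Implicit Defensive.
Import GRing.Theory Num.Theory.
Local Open Scope ring_scope.

(* The key map f (i, j) = N (g11 i - g10 j, -g01 i + g00 j) is a bijection of
   Z_d^n × Z_d^n whose inverse is g (i, j) = (g00 i + g10 j, g01 i + g11 j); the
   key unitary U is its permutation operator.

   Both Λ1 ⊠ Λ2 (through the Choi states and the 2n-qudit key
      unitary) and E ∘ (Λ1 ⊗ Λ2) ∘ E^{-1} are computed entrywise; after
      expanding Λ1, Λ2 on matrix units both become d^{-n} times the same
      explicit kernel [conv_kernel], because the 2n-qudit inverse key map acts
      on the A and A' labels independently ([keyinv2E]).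
   2. Channel property.  E and E^{-1} admit Kraus representations
      X |-> c Σ_t K_t X K_t^† with c >= 0, hence are linear and completely
      positive; Λ1 ⊗ Λ2 is CP by applying the CP of Λ2 and then of Λ1 with
      regrouped ancillas; trace preservation is a direct trace computation. *)

Section Sums.
Variable C : numClosedFieldType.

Lemma opext (T : finType) (X Y : op C T) : (forall i j, X i j = Y i j) -> X = Y.
Proof.
by move=> XY; apply: functional_extensionality => i; apply: functional_extensionality.
Qed.

Lemma sum_pair (I J : finType) (F : (I * J)%type -> C) :
  \sum_p F p = \sum_i \sum_j F (i, j).
Proof. by rewrite pair_bigA; apply: eq_bigr; case. Qed.

Lemma sum_delta (T : finType) (a : T) (F : T -> C) : \sum_k (k == a)%:R * F k = F a.
Proof.
rewrite (bigD1 a) //= eqxx mul1r big1 ?addr0 // => k ka.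
by rewrite (negbTE ka) mul0r.
Qed.

Lemma sum_delta_r (T : finType) (a : T) (F : T -> C) : \sum_k F k * (k == a)%:R = F a.
Proof. by rewrite -(sum_delta a F); apply: eq_bigr => k _; rewrite mulrC. Qed.

Lemma exchange_big2 (I J K L : finType) (F : I -> J -> K -> L -> C) :
  \sum_i \sum_j \sum_k \sum_l F i j k l = \sum_k \sum_l \sum_i \sum_j F i j k l.
Proof.
under eq_bigr => i _ do rewrite exchange_big.
rewrite exchange_big; apply: eq_bigr => k _.
under eq_bigr => i _ do rewrite exchange_big.
exact: exchange_big.
Qed.

Lemma sum_reorder4 (I J K L : finType) (F : I -> J -> K -> L -> C) :
  \sum_i \sum_j \sum_k \sum_l F i j k l = \sum_l \sum_i \sum_k \sum_j F i j k l.
Proof.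
under eq_bigr => i _ do under eq_bigr => j _ do rewrite exchange_big.
under eq_bigr => i _ do rewrite exchange_big.
rewrite exchange_big; apply: eq_bigr => l _; apply: eq_bigr => i _.
exact: exchange_big.
Qed.
End Sums.

Section Positivity.
Variable C : numClosedFieldType.

Lemma psd_reindex (S T : finType) (h : S -> T) (h' : T -> S) (hK : cancel h h')
    (h'K : cancel h' h) (X : op C T) :
  psd X -> psd (fun i j => X (h i) (h j)).
Proof.
move=> pX v; have := pX (fun t => v (h' t)).
have bh : {on [pred i | true], bijective h} by exact: onW_bij (Bijective hK h'K).
rewrite (reindex h bh) /=.
under eq_bigr => i _ do rewrite (reindex h bh) /=.
by under eq_bigr => i _ do under eq_bigr => j _ do rewrite !hK.
Qed.

Lemma psd_conic (T W : finType) (c : C) (Y : W -> op C T) :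
  0 <= c -> (forall t, psd (Y t)) -> psd (fun i j => c * \sum_t Y t i j).
Proof.
move=> c0 pY v.
have -> : \sum_i \sum_j (v i)^* * (c * \sum_t Y t i j) * v j =
          c * \sum_t \sum_i \sum_j (v i)^* * Y t i j * v j.
  rewrite [in RHS]exchange_big [in RHS]big_distrr; apply: eq_bigr => i _.
  rewrite [in RHS]exchange_big [in RHS]big_distrr; apply: eq_bigr => j _.
  by rewrite !big_distrr big_distrl; apply: eq_bigr => t _ /=; ring.
by apply: mulr_ge0 => //; apply: sumr_ge0 => t _; apply: pY.
Qed.

(* Complete positivity with an arbitrary finite ancilla R; the definition of
   channels only quantifies over the ancillas 'I_k. *)
Definition cp_map (S T : finType) (Phi : op C S -> op C T) : Prop :=
  forall (R : finType) (X : op C (R * S)%type), psd X -> psd (idtens Phi X).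

(* Every finite ancilla is a relabelling of 'I_#|R|. *)
Lemma cp_map_ordinal (S T : finType) (Phi : op C S -> op C T) :
  (forall (k : nat) (X : op C ('I_k * S)%type), psd X -> psd (idtens Phi X)) -> cp_map Phi.
Proof.
move=> cpk R X pX.
pose h (p : 'I_#|R| * S) : R * S := (enum_val p.1, p.2).
pose h' (p : R * S) : 'I_#|R| * S := (enum_rank p.1, p.2).
pose g (p : 'I_#|R| * T) : R * T := (enum_val p.1, p.2).
pose g' (p : R * T) : 'I_#|R| * T := (enum_rank p.1, p.2).
have hK : cancel h h' by case=> a b; rewrite /h /h' /= enum_valK.
have h'K : cancel h' h by case=> a b; rewrite /h /h' /= enum_rankK.
have gK : cancel g g' by case=> a b; rewrite /g /g' /= enum_valK.
have g'K : cancel g' g by case=> a b; rewrite /g /g' /= enum_rankK.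
have <- : (fun a b => idtens Phi (fun p q => X (h p) (h q)) (g' a) (g' b)) = idtens Phi X.
  by apply: opext => -[r t] [r' t']; rewrite /idtens /h /= !enum_rankK.
exact: (psd_reindex g'K gK (cpk _ _ (psd_reindex hK h'K pX))).
Qed.

Lemma cp_comp (S T U : finType) (Phi : op C T -> op C U) (Psi : op C S -> op C T) :
  cp_map Phi -> cp_map Psi -> cp_map (fun X => Phi (Psi X)).
Proof. by move=> cpPhi cpPsi R X pX; exact: (cpPhi _ _ (cpPsi _ _ pX)). Qed.

Definition sandwich (S T : finType) (K : T -> S -> C) (X : op C S) : op C T :=
  fun i j => \sum_k \sum_l K i k * X k l * (K j l)^*.

Lemma sandwich_expand (S T : finType) (K : T -> S -> C) (Y : S -> S -> C) (u u' : T -> C) :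
  \sum_i \sum_j (u i)^* * sandwich K Y i j * u' j =
  \sum_k \sum_l (\sum_i (K i k)^* * u i)^* * Y k l * (\sum_j (K j l)^* * u' j).
Proof.
transitivity (\sum_i \sum_j \sum_k \sum_l (u i)^* * K i k * Y k l * (K j l)^* * u' j).
  apply: eq_bigr => i _; apply: eq_bigr => j _.
  rewrite /sandwich big_distrr big_distrl; apply: eq_bigr => k _.
  by rewrite /= big_distrr big_distrl; apply: eq_bigr => l _ /=; ring.
rewrite exchange_big2; apply: eq_bigr => k _; apply: eq_bigr => l _.
rewrite rmorph_sum /= !big_distrl; apply: eq_bigr => i _.
by rewrite /= big_distrr; apply: eq_bigr => j _; rewrite /= rmorphM /= conjCK; ring.
Qed.
Lemma sum_pair2 (R T : finType) (F : (R * T)%type -> (R * T)%type -> C) :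
  \sum_a \sum_b F a b = \sum_r \sum_r' \sum_i \sum_j F (r, i) (r', j).
Proof.
rewrite sum_pair; apply: eq_bigr => r _.
under eq_bigr => i _ do rewrite sum_pair.
exact: exchange_big.
Qed.

(* K X K^† is completely positive: on R-blocks the Hermitian form of
   (id ⊗ K·K^†)(X) at v is that of X at (I ⊗ K^†) v. *)
Lemma cp_sandwich (S T : finType) (K : T -> S -> C) : cp_map (sandwich K).
Proof.
move=> R X pX v.
pose w (p : R * S) := \sum_i (K i p.2)^* * v (p.1, i).
suff -> : \sum_a \sum_b (v a)^* * idtens (sandwich K) X a b * v b =
          \sum_p \sum_q (w p)^* * X p q * w q by exact: pX.
rewrite !sum_pair2; apply: eq_bigr => r _; apply: eq_bigr => r' _.
exact: (sandwich_expand K (fun s s' => X (r, s) (r', s')) (fun i => v (r, i)) (fun j => v (r', j))).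
Qed.

Definition kraus_rep (S T W : finType) (Phi : op C S -> op C T) (c : C)
    (K : W -> T -> S -> C) : Prop :=
  forall X i j, Phi X i j = c * \sum_t sandwich (K t) X i j.

Lemma kraus_linear (S T W : finType) (Phi : op C S -> op C T) c (K : W -> T -> S -> C) :
  kraus_rep Phi c K -> linmap Phi.
Proof.
move=> HP a X Y; apply: opext => i j; rewrite /addop /scaleop !HP.
rewrite mulrCA -mulrDr; congr (_ * _); rewrite big_distrr -big_split; apply: eq_bigr => t _ /=.
rewrite big_distrr -big_split; apply: eq_bigr => k _ /=.
by rewrite big_distrr -big_split; apply: eq_bigr => l _ /=; ring.
Qed.

Lemma kraus_cp (S T W : finType) (Phi : op C S -> op C T) c (K : W -> T -> S -> C) :
  0 <= c -> kraus_rep Phi c K -> cp_map Phi.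
Proof.
move=> c0 HP R X pX.
have -> : idtens Phi X = fun a b => c * \sum_t idtens (sandwich (K t)) X a b.
  by apply: opext => a b; rewrite /idtens HP.
by apply: psd_conic => // t; apply: cp_sandwich.
Qed.
End Positivity.

Section LinearMaps.
Variables (C : numClosedFieldType) (S T : finType) (L : op C S -> op C T).
Hypothesis linL : linmap L.

Lemma lin0 : L (fun _ _ => 0) = (fun _ _ => 0).
Proof.
have := linL 1 (fun _ _ => 0) (fun _ _ => 0).
have -> : addop (scaleop 1 (fun _ _ => 0)) (fun _ _ => 0) = (fun _ _ => 0) :> op C S.
  by apply: opext => i j; rewrite /addop /scaleop mulr0 addr0.
move=> L0; apply: opext => i j; apply: (addrI (L (fun _ _ => 0) i j)).
by rewrite addr0 [in RHS]L0 /addop /scaleop mul1r.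
Qed.

Lemma linZ a X : L (scaleop a X) = scaleop a (L X).
Proof.
have := linL a X (fun _ _ => 0).
have -> : addop (scaleop a X) (fun _ _ => 0) = scaleop a X.
  by apply: opext => i j; rewrite /addop addr0.
by move=> ->; rewrite lin0; apply: opext => i j; rewrite /addop addr0.
Qed.

Lemma linD X Y : L (addop X Y) = addop (L X) (L Y).
Proof.
have := linL 1 X Y.
have -> : scaleop 1 X = X by apply: opext => i j; rewrite /scaleop mul1r.
by move=> ->; apply: opext => i j; rewrite /addop /scaleop mul1r.
Qed.

Lemma lin_sum (I : Type) (r : seq I) (F : I -> op C S) :
  L (fun x y => \sum_(i <- r) F i x y) = fun x y => \sum_(i <- r) L (F i) x y.
Proof.
elim: r => [|a r IH].
  have -> : (fun x y => \sum_(i <- [::]) F i x y) = (fun _ _ => 0) :> op C S.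
    by apply: opext => x y; rewrite big_nil.
  by rewrite lin0; apply: opext => x y; rewrite big_nil.
have -> : (fun x y => \sum_(i <- a :: r) F i x y) =
          addop (F a) (fun x y => \sum_(i <- r) F i x y).
  by apply: opext => x y; rewrite big_cons.
by rewrite linD IH; apply: opext => x y; rewrite big_cons.
Qed.

Lemma lin_expand X i j : L X i j = \sum_a \sum_b X a b * L (ketbra C a b) i j.
Proof.
have eX : X = fun x y => \sum_p scaleop (X p.1 p.2) (ketbra C p.1 p.2) x y.
  apply: opext => x y; rewrite -(sum_delta (x, y) (fun p => X p.1 p.2)).
  by apply: eq_bigr => -[a b] _; rewrite /scaleop /ketbra -xpair_eqE eq_sym mulrC.
by rewrite {1}eX lin_sum sum_pair; apply: eq_bigr => a _; apply: eq_bigr => b _; rewrite linZ.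
Qed.
End LinearMaps.

Lemma lin_comp (C : numClosedFieldType) (S T U : finType)
    (Phi : op C T -> op C U) (Psi : op C S -> op C T) :
  linmap Phi -> linmap Psi -> linmap (fun X => Phi (Psi X)).
Proof. by move=> linPhi linPsi a X Y; rewrite linPsi linPhi. Qed.

Section Traces.
Variable C : numClosedFieldType.

Lemma trop_ketbra (T : finType) (a b : T) : trop (ketbra C a b) = (a == b)%:R.
Proof.
rewrite /trop /ketbra (bigD1 a) //= eqxx /= big1 ?addr0 // => i ia.
by rewrite (negbTE ia).
Qed.

Lemma trop_ptrace2 (S T : finType) (Y : op C (S * T)%type) : trop (ptrace2 Y) = trop Y.
Proof. by rewrite /trop /ptrace2 sum_pair. Qed.

Lemma trop_tensop (S T : finType) (X : op C S) (Y : op C T) :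
  trop (tensop X Y) = trop X * trop Y.
Proof.
rewrite /trop sum_pair big_distrl; apply: eq_bigr => s _.
by rewrite big_distrr.
Qed.

Lemma trop_scaled_id (T : finType) (c : C) : trop (scaleop c (@idop C T)) = c * #|T|%:R.
Proof.
rewrite /trop /scaleop /idop; under eq_bigr => t _ do rewrite eqxx mulr1.
by rewrite sumr_const mulr_natr.
Qed.
End Traces.

Section TensorMaps.
Variables (C : numClosedFieldType) (S1 T1 S2 T2 : finType).
Variables (L1 : op C S1 -> op C T1) (L2 : op C S2 -> op C T2).

(* Λ1 ⊗ Λ2 is linear, and it is trace preserving when Λ1 and Λ2 are, since
   it maps |a1><b1| ⊗ |a2><b2| to Λ1(|a1><b1|) ⊗ Λ2(|a2><b2|). *)
Lemma tensmap_linear : linmap (tensmap L1 L2).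
Proof.
move=> a X Y; apply: opext => i j; rewrite /addop /scaleop /tensmap.
rewrite big_distrr -big_split; apply: eq_bigr => p _ /=.
by rewrite big_distrr -big_split; apply: eq_bigr => q _ /=; ring.
Qed.

Lemma tensmap_TP :
  (forall X, trop (L1 X) = trop X) -> (forall X, trop (L2 X) = trop X) ->
  forall X, trop (tensmap L1 L2 X) = trop X.
Proof.
move=> tp1 tp2 X; rewrite /trop /tensmap exchange_big /=; apply: eq_bigr => a _.
rewrite exchange_big /= -(sum_delta a (X a)); apply: eq_bigr => b _.
rewrite -big_distrr /= mulrC; congr (_ * _).
have -> : (b == a) = (a.1 == b.1) && (a.2 == b.2).
  by case: a b => [a1 a2] [b1 b2]; rewrite xpair_eqE (eq_sym b1) (eq_sym b2).
rewrite -mulnb natrM -(trop_ketbra C a.1 b.1) -(trop_ketbra C a.2 b.2) -tp1 -tp2.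
rewrite /trop sum_pair big_distrl /=; apply: eq_bigr => i _.
by rewrite big_distrr.
Qed.

(* Λ1 ⊗ Λ2 acts as (id ⊗ Λ2) after (Λ1 ⊗ id), up to regrouping the ancilla:
   apply complete positivity of Λ2 with ancilla R * S1, then of Λ1 with
   ancilla R * T2; the two results agree by expanding Λ1, Λ2 on matrix units. *)
Lemma tensmap_cp : linmap L1 -> linmap L2 -> cp_map L1 -> cp_map L2 ->
  cp_map (tensmap L1 L2).
Proof.
move=> lin1 lin2 cp1 cp2 R X pX.
pose h1 (p : (R * S1) * S2) : R * (S1 * S2) := (p.1.1, (p.1.2, p.2)).
pose h1' (p : R * (S1 * S2)) : (R * S1) * S2 := ((p.1, p.2.1), p.2.2).
have h1K : cancel h1 h1' by case=> [[]].
have h1'K : cancel h1' h1 by case=> ? [].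
pose h2 (p : (R * T2) * S1) : (R * S1) * T2 := ((p.1.1, p.2), p.1.2).
pose h2' (p : (R * S1) * T2) : (R * T2) * S1 := ((p.1.1, p.2), p.1.2).
have h2K : cancel h2 h2' by case=> [[]].
have h2'K : cancel h2' h2 by case=> [[]].
pose h3 (p : R * (T1 * T2)) : (R * T2) * T1 := ((p.1, p.2.2), p.2.1).
pose h3' (p : (R * T2) * T1) : R * (T1 * T2) := (p.1.1, (p.2, p.1.2)).
have h3K : cancel h3 h3' by case=> ? [].
have h3'K : cancel h3' h3 by case=> [[]].
have := cp2 _ _ (psd_reindex h1K h1'K pX).
move=> /(psd_reindex h2K h2'K) /cp1 /(psd_reindex h3K h3'K).
congr psd; apply: opext => -[r [t1 t2]] [r' [t1' t2']].
rewrite /idtens /h3 /h2 /h1 /= lin_expand //.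
under eq_bigr => a1 _ do under eq_bigr => b1 _ do rewrite lin_expand //.
rewrite /tensmap sum_pair /=; apply: eq_bigr => a1 _.
under [RHS]eq_bigr => a2 _ do rewrite sum_pair /=.
rewrite exchange_big /=; apply: eq_bigr => b1 _.
rewrite big_distrl /=; apply: eq_bigr => a2 _.
by rewrite big_distrl /=; apply: eq_bigr => b2 _; ring.
Qed.
End TensorMaps.

Lemma det2 (K : comNzRingType) (G : 'M[K]_2) : \det G = G 0 0 * G 1 1 - G 0 1 * G 1 0.
Proof.
rewrite (expand_det_row _ 0) !big_ord_recl big_ord0 addr0 /cofactor !det_mx11 !mxE /=.
have -> : lift 0 0 = 1 :> 'I_2 by apply/val_inj.
have -> : lift 1 0 = 0 :> 'I_2 by apply/val_inj.
by rewrite expr0 expr1 mul1r mulN1r mulrN.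
Qed.

Section KeyMap.
Variables (K : fieldType) (V : lmodType K) (G : 'M[K]_2).
Hypothesis detG : \det G != 0.

Definition keyinv (x : V * V) : V * V :=
  (G 0 0 *: x.1 + G 1 0 *: x.2, G 0 1 *: x.1 + G 1 1 *: x.2).

Lemma scale_comb (u w p q r s : K) (x y : V) :
  u *: (p *: x - q *: y) + w *: (r *: x + s *: y) = (u * p + w * r) *: x + (w * s - u * q) *: y.
Proof.
rewrite !scalerDr !scalerN !scalerA addrACA scalerDl scalerBl; congr (_ + _).
by rewrite addrC.
Qed.

Lemma keymapK : cancel (keymap G) keyinv.
Proof.
case=> x y; rewrite /keymap /keyinv /= !scale_comb.
have detE : (\det G)^-1 * (G 0 0 * G 1 1 - G 0 1 * G 1 0) = 1 by rewrite -det2 mulVf.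
congr (_ , _).
- have -> : G 0 0 * ((\det G)^-1 * G 1 1) + G 1 0 * - ((\det G)^-1 * G 0 1) = 1.
    by rewrite -detE; ring.
  have -> : G 1 0 * ((\det G)^-1 * G 0 0) - G 0 0 * ((\det G)^-1 * G 1 0) = 0 by ring.
  by rewrite scale1r scale0r addr0.
- have -> : G 0 1 * ((\det G)^-1 * G 1 1) + G 1 1 * - ((\det G)^-1 * G 0 1) = 0 by ring.
  have -> : G 1 1 * ((\det G)^-1 * G 0 0) - G 0 1 * ((\det G)^-1 * G 1 0) = 1.
    by rewrite -detE; ring.
  by rewrite scale1r scale0r add0r.
Qed.
End KeyMap.

Section PermutationOperators.
Variables (C : numClosedFieldType) (T : finType) (f g : T -> T).
Hypotheses (fK : cancel f g) (gK : cancel g f).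
Local Notation P := (permop C f).

Lemma conj_permop (X : op C T) y y' : conj P X y y' = X (g y) (g y').
Proof.
have collapse y0 (F : T -> C) : \sum_k (y0 == f k)%:R * F k = F (g y0).
  by rewrite -(sum_delta (g y0) F); apply: eq_bigr => k _; rewrite eq_sym (can2_eq fK gK).
rewrite /conj /mulop /adjop /permop.
under eq_bigr => l _ do rewrite (collapse y (fun k => X k l)).
by rewrite -(collapse y' (fun l => X (g y) l)); apply: eq_bigr => l _; rewrite conjC_nat mulrC.
Qed.

Lemma adj_conj_permop (W : op C T) x x' : mulop (mulop (adjop P) W) P x x' = W (f x) (f x').
Proof.
rewrite /mulop /adjop /permop.
under eq_bigr => l _ do under eq_bigr => k _ do rewrite conjC_nat.
under eq_bigr => l _ do rewrite (sum_delta (f x) (fun k => W k l)).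
by rewrite -(sum_delta (f x') (W (f x))); apply: eq_bigr => l _; rewrite mulrC.
Qed.

Lemma trop_conj_permop (X : op C T) : trop (conj P X) = trop X.
Proof.
rewrite /trop; under eq_bigr => y _ do rewrite conj_permop.
by rewrite (reindex f) /=; [apply: eq_bigr => x _; rewrite fK | exact: onW_bij (Bijective fK gK)].
Qed.

Lemma trop_adj_conj_permop (W : op C T) : trop (mulop (mulop (adjop P) W) P) = trop W.
Proof.
rewrite /trop; under eq_bigr => x _ do rewrite adj_conj_permop.
by rewrite [RHS](reindex f) //; exact: onW_bij (Bijective fK gK).
Qed.
End PermutationOperators.

Section KeyChannels.
Variables (C : numClosedFieldType) (T : finType) (f : (T * T)%type -> (T * T)%type).
Local Notation P := (permop C f).

Lemma ptrace_conj_kraus :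
  kraus_rep (fun X => ptrace2 (conj P X)) 1 (fun t i k => P (i, t) k).
Proof.
move=> X i j; rewrite mul1r /ptrace2 /conj /mulop /adjop /sandwich; apply: eq_bigr => t _.
under eq_bigr => l _ do rewrite big_distrl.
exact: exchange_big.
Qed.

Lemma adj_conj_tensor_kraus (c : C) :
  kraus_rep (fun rho => mulop (mulop (adjop P) (tensop rho (scaleop c (@idop C T)))) P) c
    (fun t x k => (P (k, t) x)^*).
Proof.
move=> rho x x'; rewrite adj_conj_permop /sandwich /tensop /scaleop /idop /permop.
case: (f x) (f x') => [u v] [u' v'] /=.
under eq_bigr => t _ do under eq_bigr => k _ do under eq_bigr => l _ do
  rewrite conjCK conjC_nat !xpair_eqE -!mulnb !natrM.
transitivity (c * \sum_t (t == v)%:R * ((t == v')%:R * rho u u')).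
  by rewrite sum_delta; ring.
congr (_ * _); apply: eq_bigr => t _.
rewrite -(sum_delta u (fun k => (t == v)%:R * ((t == v')%:R * rho k u'))).
apply: eq_bigr => k _.
rewrite -(sum_delta u' (fun l => (k == u)%:R * ((t == v)%:R * ((t == v')%:R * rho k l)))).
by apply: eq_bigr => l _; ring.
Qed.
End KeyChannels.

Section BlockSums.
Variables (C : numClosedFieldType) (W : finType) (f g : (W * W)%type -> (W * W)%type).
Hypotheses (fK : cancel f g) (gK : cancel g f).

(* Summing against a kernel that, after the change of labels f, is of the form
   P ⊗ (a0 I): the second coordinate is forced to agree. *)
Lemma sum_block_diagonal (a0 : C) (P : W -> W -> C) (M : (W * W)%type -> (W * W)%type -> C) :
  \sum_a \sum_b P (f a).1 (f b).1 * (a0 * ((f a).2 == (f b).2)%:R) * M a b =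
  a0 * \sum_s \sum_B \sum_k P s k * M (g (s, B)) (g (k, B)).
Proof.
have bg : {on [pred i | true], bijective g} by exact: onW_bij (Bijective gK fK).
rewrite (reindex g bg) /=; under eq_bigr => a _ do rewrite (reindex g bg) /=.
under eq_bigr => a _ do under eq_bigr => b _ do rewrite !gK.
rewrite sum_pair big_distrr; apply: eq_bigr => s _; rewrite big_distrr; apply: eq_bigr => B _ /=.
rewrite sum_pair big_distrr; apply: eq_bigr => k _ /=.
rewrite -(sum_delta B (fun B' => a0 * (P s k * M (g (s, B)) (g (k, B'))))).
by apply: eq_bigr => B' _; rewrite eq_sym; ring.
Qed.
End BlockSums.

Section Convolution.
Variables (C : numClosedFieldType) (d n : nat) (G : 'M['F_d]_2).
Hypotheses (d_prime : prime d) (detG : \det G != 0).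
Local Notation V := (qv d n).
Local Notation f := (@keymap _ V G).
Local Notation g := (@keyinv _ V G).
Local Notation f2 := (@keymap _ (V * V)%type G).
Local Notation g2 := (@keyinv _ (V * V)%type G).
Local Notation dn := ((d ^ n)%:R : C).
Local Notation keyK := (@keymapK _ V G detG).
Local Notation keyK2 := (@keymapK _ (V * V)%type G detG).

Lemma keyinvK : cancel g f. Proof. exact: canF_sym keyK. Qed.
Lemma keyinv2K : cancel g2 f2. Proof. exact: canF_sym keyK2. Qed.

Lemma keyinv2E (s i B B' : V) : g2 ((s, i), (B, B')) =
  (((g (s, B)).1, (g (i, B')).1), ((g (s, B)).2, (g (i, B')).2)).
Proof. by []. Qed.

Lemma dn_neq0 : dn != 0.
Proof. by rewrite pnatr_eq0 -lt0n expn_gt0 prime_gt0. Qed.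

Lemma card_qv : #|V| = (d ^ n)%N.
Proof. by rewrite card_mx card_Fp // mul1n. Qed.

Lemma choiE (L : op C V -> op C V) : linmap L -> forall s i k j,
  choi L (s, i) (k, j) = dn^-1 * L (ketbra C s k) i j.
Proof.
move=> linL s i k j; rewrite /choi /idtens /maxent /=.
have -> : (fun a b => dn^-1 * ((s == a) && (k == b))%:R) = scaleop dn^-1 (ketbra C s k).
  by apply: opext => a b; rewrite /scaleop /ketbra /= (eq_sym s) (eq_sym k).
by rewrite linZ.
Qed.

(* The common value of both sides of the identity, up to the factor d^{-n}. *)
Definition conv_kernel (L1 L2 : op C V -> op C V) (rho : op C V) (i j : V) : C :=
  \sum_t \sum_s \sum_B \sum_k rho s k *
    (L1 (ketbra C (g (s, B)).1 (g (k, B)).1) (g (i, t)).1 (g (j, t)).1 *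
     L2 (ketbra C (g (s, B)).2 (g (k, B)).2) (g (i, t)).2 (g (j, t)).2).

(* Entries of Λ1 ⊠ Λ2, computed from the Choi states: the 2n-qudit key map
   splits into two n-qudit ones and the factors d^n, d^{-n}, d^{-n} leave d^{-n}. *)
Lemma chconvE (L1 L2 : op C V -> op C V) : linmap L1 -> linmap L2 -> forall rho i j,
  chconv G L1 L2 rho i j = dn^-1 * conv_kernel L1 L2 rho i j.
Proof.
move=> lin1 lin2 rho i j.
rewrite /chconv /map_of_choi /scaleop /ptrace1 /mulop.
under eq_bigr => s _ do rewrite sum_pair.
under eq_bigr => s _ do under eq_bigr => k _ do under eq_bigr => k' _ do
  rewrite /tensop /transpose /idop /= mulrA.
under eq_bigr => s _ do under eq_bigr => k _ do rewrite sum_delta_r.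
rewrite /sconv2 /ptrace2 /Ukey2.
under eq_bigr => s _ do under eq_bigr => k _ do under eq_bigr => t _ do
  rewrite (conj_permop keyK2 keyinv2K).
under eq_bigr => s _ do under eq_bigr => k _ do rewrite sum_pair.
under eq_bigr => s _ do under eq_bigr => k _ do under eq_bigr => B _ do
  under eq_bigr => B' _ do rewrite !keyinv2E /tensop !choiE //.
rewrite /conv_kernel -sum_reorder4 !big_distrr; apply: eq_bigr => s _.
rewrite /= !big_distrr; apply: eq_bigr => k _.
rewrite /= big_distrl !big_distrr; apply: eq_bigr => B _.
rewrite /= big_distrl !big_distrr; apply: eq_bigr => t _ /=.
by field; exact: dn_neq0.
Qed.

(* Entries of E ∘ (Λ1 ⊗ Λ2) ∘ E^{-1}: the factor I/d^n of E^{-1} identifies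
   the B labels of the two arguments. *)
Lemma conjugatedE (L1 L2 : op C V -> op C V) rho i j :
  Emap G (tensmap L1 L2 (Einv G rho)) i j = dn^-1 * conv_kernel L1 L2 rho i j.
Proof.
rewrite /Emap /ptrace2 /Ukey big_distrr; apply: eq_bigr => t _.
rewrite (conj_permop keyK keyinvK) /tensmap /Einv /Ukey.
under eq_bigr => a _ do under eq_bigr => b _ do
  rewrite adj_conj_permop /tensop /scaleop /idop.
exact: (sum_block_diagonal keyK keyinvK dn^-1 rho
  (fun a b => L1 (ketbra C a.1 b.1) (g (i, t)).1 (g (j, t)).1 *
              L2 (ketbra C a.2 b.2) (g (i, t)).2 (g (j, t)).2)).
Qed.

Lemma chconv_conjugated (L1 L2 : op C V -> op C V) : linmap L1 -> linmap L2 ->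
  chconv G L1 L2 = fun rho => Emap G (tensmap L1 L2 (Einv G rho)).
Proof.
move=> lin1 lin2; apply: functional_extensionality => rho; apply: opext => i j.
by rewrite chconvE // conjugatedE.
Qed.

Lemma Emap_kraus : kraus_rep (@Emap C d G n) 1 (fun t i k => permop C f (i, t) k).
Proof. exact: ptrace_conj_kraus. Qed.

Lemma Einv_kraus : kraus_rep (@Einv C d G n) dn^-1 (fun t x k => (permop C f (k, t) x)^*).
Proof. exact: adj_conj_tensor_kraus. Qed.

(* E ∘ (Λ1 ⊗ Λ2) ∘ E^{-1} is a channel: E, E^{-1} and Λ1 ⊗ Λ2 are linear
   and CP; the traces are multiplied by 1, 1 and d^{-n} · d^n. *)
Lemma conjugated_channel (L1 L2 : op C V -> op C V) : is_channel L1 -> is_channel L2 ->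
  is_channel (fun rho => Emap G (tensmap L1 L2 (Einv G rho))).
Proof.
move=> [lin1 cp1 tp1] [lin2 cp2 tp2]; split.
- exact: lin_comp (kraus_linear Emap_kraus)
                  (lin_comp (tensmap_linear L1 L2) (kraus_linear Einv_kraus)).
- have cp12 := tensmap_cp lin1 lin2 (cp_map_ordinal cp1) (cp_map_ordinal cp2).
  have dn_inv_ge0 : 0 <= dn^-1 by rewrite invr_ge0 ler0n.
  move=> k X pX.
  exact: (cp_comp (kraus_cp ler01 Emap_kraus) (cp_comp cp12 (kraus_cp dn_inv_ge0 Einv_kraus))).
- move=> rho; rewrite /Emap trop_ptrace2 (trop_conj_permop keyK keyinvK).
  rewrite tensmap_TP // /Einv (trop_adj_conj_permop keyK keyinvK).
  by rewrite trop_tensop trop_scaled_id card_qv mulVf ?mulr1 ?dn_neq0.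
Qed.
End Convolution.

Theorem mainTheorem18 (C : numClosedFieldType) (d n : nat) (G : 'M['F_d]_2)
    (L1 L2 : op C (qv d n) -> op C (qv d n)) :
  prime d -> (1 <= n)%N -> nontrivial G -> \det G != 0 ->
  is_channel L1 -> is_channel L2 ->
  is_channel (chconv G L1 L2) /\
  (forall rho : op C (qv d n),
     chconv G L1 L2 rho = Emap G (tensmap L1 L2 (Einv G rho))).
Proof.
move=> d_prime _ _ detG channel1 channel2.
have [lin1 _ _] := channel1; have [lin2 _ _] := channel2.
rewrite (chconv_conjugated d_prime detG lin1 lin2).
by split=> //; apply: conjugated_channel.
Qed.
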